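(* The ascending-price auction $G^*$ (defined in the context) is an incentive compatible gradual mechanism implementing the second-price auction rule.
   Context: General framework. Agents $N$ with finite type spaces $\Theta_i$, types inducing complete transitive preferences $R(\theta_i)$ over outcomes; an SCF $f$ maps type profiles to outcomes. A gradual mechanism (GM) implementing $f$ is a finite extensive game form with perfect recall (possibly simultaneous moves, all agents active at the initial history, information sets partitioning each agent's decision nodes, outcome function on terminal histories) in which each action of agent $i$ is a nonempty subset of $\Theta_i$, at each decision node of $i$ the available actions are pairwise disjoint with union equal to the last action of $i$ taken before (or $\Theta_i$ if none), and each terminal history $z$ receives outcome $f(\theta)$ for any $\theta$ in the product $\Theta(z)$ of the agents' last actions along $z$. A strategy $s_i$ is unconditional for $\theta_i$ if it chooses the action containing $\theta_i$ at every decision node of $i$ whose current report contains $\theta_i$. The GM is incentive compatible if for every agent $i$, type $\theta_i$, unconditional strategy $s_{\theta_i}$, strategy $s_i$ and profile $s_{-i}$ of others' strategies, the outcome under $(s_{\theta_i},s_{-i})$ is weakly preferred under $R(\theta_i)$ to that under $(s_i,s_{-i})$. Auction environment. Bidders $N=\{1,\dots,n\}$ ($n\ge2$), each with private value $v_i\in V=\{1,\dots,m\}$ ($m\ge2$), so $\Theta_i=V$. An outcome is a probability distribution over which bidder receives the item together with the price the winner pays; bidder $i$ with value $v_i$ ranks outcomes by expected payoff (probability of winning times $v_i$ minus the price paid upon winning). The second-price auction rule assigns to each value profile $v$ the outcome in which the item goes, with equal probability, to one of the bidders with the highest value, who pays the second-highest entry of $v$ (which equals the highest value if there is a tie at the top).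 Ascending-price auction $G^*$. Price levels $p=1,2,\dots$. At price $p=1$ all bidders are active; at price $p\ge2$ the active bidders are those who chose to stay at $p-1$. At price $p\le m-1$, active bidders move one at a time in increasing index order; each chooses ''stay'', i.e. the action $\{v\in V:v>p\}$, or ''leave'', i.e. $\{v\in V:v=p\}$ (their current report is $\{p,\dots,m\}$). After all active bidders have moved at $p$: if exactly one stayed, she wins and pays $p$; if none stayed, a uniformly random bidder among those who left at $p$ wins and pays $p$; if at least two stayed and $p<m-1$, the price rises to $p+1$; if at least two stayed and $p=m-1$, the price reaches $m$, the auction stops, and a uniformly random bidder among those who stayed at $m-1$ wins and pays $m$. Information: when bidder $i$ moves at price $p$, she knows all choices made at all earlier price levels; as to the choices of the bidders who moved before her at price $p$: if at least two of them stayed, she knows exactly their choices; otherwise she knows only that at most one of them stayed. That is, an information set of $i$ is a singleton unless it contains a history in which fewer than two earlier movers at price $p$ stayed, in which case it consists of all histories that coincide with it at all previous price levels and in which fewer than two earlier movers at price $p$ stayed. *)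

From mathcomp Require Import all_boot all_order all_algebra.
Set Implicit Arguments. Unset Strict Implicit. Unset Printing Implicit Defensive.
Import Order.TTheory GRing.Theory Num.Theory.

(* Values: V = {1,...,m}, represented by naturals v with 1 <= v <= m.
   Outcomes produced by the auction / the second-price rule: a pair (W, p)
   meaning "the item goes to a uniformly random member of W, who pays p". *)
Definition outcome (n : nat) := ({set 'I_n} * nat)%type.

(* Expected payoff of bidder i with value vi:
   Pr(i wins) * vi - (price paid upon winning) * Pr(i wins). *)
Definition payoff (n : nat) (i : 'I_n) (vi : nat) (o : outcome n) : rat :=
  if i \in o.1 then ((vi%:R - (o.2)%:R) / (#|o.1|)%:R)%R else 0%R.

Definition second_highest (n : nat) (v : 'I_n -> nat) : nat :=
  nth 0 (sort geq [seq v i | i <- enum 'I_n]) 1.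

Definition spa (n : nat) (v : 'I_n -> nat) : outcome n :=
  ([set i | v i == \max_j v j], second_highest v).

Definition current_report (m p : nat) : pred nat := [pred v | (p <= v) && (v <= m)].
Definition stay_act (m p : nat) : pred nat := [pred v | (p < v) && (v <= m)].
Definition leave_act (p : nat) : pred nat := [pred v | v == p].

Definition gm_action_structure (m : nat) : Prop :=
  forall p, 1 <= p < m ->
    [/\ (exists v, stay_act m p v), (exists v, leave_act p v),
        (forall v, ~~ (stay_act m p v && leave_act p v)),
        (forall v, current_report m p v = stay_act m p v || leave_act p v) &
        (forall v, current_report m p v =
                   if p == 1 then (1 <= v <= m) else stay_act m p.-1 v)].

(* An information set of bidder i at price p is described by
   - p,
   - the history of earlier price levels, given as the list
     hist = [A_1; ...; A_p] of active sets (A_{k+1} = those who stayed at k),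
   - the observation about earlier movers at price p: [Some S] (S = exact set
     of earlier movers who stayed) if at least two of them stayed, [None]
     otherwise ("at most one stayed").
   A (pure) strategy maps this to true (= stay, action {v > p}) or
   false (= leave, action {v = p}). *)
Definition strat (n : nat) := nat -> seq {set 'I_n} -> option {set 'I_n} -> bool.

Definition observe (n : nat) (S : {set 'I_n}) : option {set 'I_n} :=
  if 1 < #|S| then Some S else None.

(* Active bidders at price p (= last hist) move in increasing index order;
   S accumulates the stayers among those who already moved. *)
Definition stayers (n : nat) (s : 'I_n -> strat n) (p : nat) (hist : seq {set 'I_n})
    : {set 'I_n} :=
  foldl (fun S i => if (i \in last set0 hist) && s i p hist (observe S)
                    then i |: S else S) set0 (enum 'I_n).

(* Terminal history reached: [A_1; ...; A_p; St], where p is the last price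
   level at which bidders moved and St is the set of stayers at p. *)
Fixpoint run (n m : nat) (s : 'I_n -> strat n) (fuel p : nat) (hist : seq {set 'I_n})
    : seq {set 'I_n} :=
  let St := stayers s p hist in
  match fuel with
  | 0 => rcons hist St
  | f.+1 => if (1 < #|St|) && (p.+1 < m) then run m s f p.+1 (rcons hist St)
            else rcons hist St
  end.

Definition play (n m : nat) (s : 'I_n -> strat n) : seq {set 'I_n} :=
  run m s m 1 [:: setT].

Definition outcome_of (n m : nat) (z : seq {set 'I_n}) : outcome n :=
  let p := (size z).-1 in
  let St := last set0 z in
  let A := nth set0 z p.-1 in
  if #|St| == 1 then (St, p)
  else if St == set0 then (A, p)      (* nobody stayed: random among leavers at p *)
  else (St, m).                       (* >= 2 stayed at m-1: price m, random stayer *)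

(* Theta_i(z): bidder i's last action along the terminal history z.
   If i stayed at the final level p, it is {v in V | v > p};
   otherwise i left at level k = number of levels at which i was active
   (active sets are nested), and the action is {k}. *)
Definition Theta (n m : nat) (z : seq {set 'I_n}) (i : 'I_n) : pred nat :=
  [pred v | (1 <= v <= m) &&
     (if i \in last set0 z then (size z).-1 < v
      else v == count (fun A : {set 'I_n} => i \in A) z)].

(* Unconditional strategy for value vi: at every decision node (price p with
   1 <= p <= m-1) whose current report {p..m} contains vi, choose the action
   containing vi (stay iff vi > p). *)
Definition unconditional (n m vi : nat) (si : strat n) : Prop :=
  forall p hist o, 1 <= p < m -> p <= vi -> si p hist o = (p < vi).

Definition upd (n : nat) (s : 'I_n -> strat n) (i : 'I_n) (si : strat n) : 'I_n -> strat n :=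
  fun j => if j == i then si else s j.

From mathcomp Require Import all_boot all_order all_algebra.
From mathcomp Require Import zify.
Import Order.TTheory GRing.Theory Num.Theory.
Set Implicit Arguments. Unset Strict Implicit. Unset Printing Implicit Defensive.

(* At a terminal history of G* the reports pin the values down: a bidder who
   left at price k has value k and a bidder still in at the last price p has
   value above p.  In each of the three ways the auction can end (one stayer,
   no stayer, several stayers at m-1) this makes the outcome that of the
   second-price rule.

   A truthful bidder never pays more than her value, so her payoff is
   nonnegative.  A deviation first departs from truthful play either by
   staying at a price p >= v_i, after which any win costs at least p, or by
   leaving at a price p < v_i.  In the latter case she can only win if nobody
   stays at p; as bidders moving after her cannot tell "no earlier mover
   stayed" from "exactly one did", truthful play would then have made her the
   sole winner at price p. *)

Lemma count_enum (T : finType) (P : pred T) : count P (enum T) = #|[set j | P j]|.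
Proof.
rewrite cardE /enum_mem size_filter count_filter.
by apply: eq_count => x; rewrite /= !inE andbT.
Qed.

Lemma nth1_sorted_geq (s : seq nat) x : sorted geq s ->
  1 < count (leq x) s -> count (ltn x) s <= 1 -> nth 0 s 1 = x.
Proof.
case: s => [|a [|b t]] //=; first by case: (x <= a).
move=> /andP [ba sorted_bt] ge2 gt1.
have geq_trans : transitive geq by move=> y z w zy wz; exact: leq_trans wz zy.
have /allP tb := order_path_min geq_trans sorted_bt.
case: (ltngtP b x) => // [bx | xb].
- have none_t : count (leq x) t = 0.
    apply/eqP; rewrite -leqn0 leqNgt -has_count; apply/hasPn => y /tb /= yb.
    by rewrite -ltnNge (leq_ltn_trans yb bx).
  by move: ge2; rewrite none_t (leqNgt x b) bx addn0; case: (x <= a).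
- by move: gt1; rewrite xb (leq_trans xb ba) !add1n ltnS.
Qed.

Lemma second_highestE n (v : 'I_n -> nat) x :
  1 < #|[set j | x <= v j]| -> #|[set j | x < v j]| <= 1 -> second_highest v = x.
Proof.
have count_sort P : count P (sort geq [seq v i | i <- enum 'I_n]) = #|[set j | P (v j)]|.
  by rewrite (permP (permEl (perm_sort _ _))) count_map count_enum.
move=> ge2 gt1; apply: nth1_sorted_geq; rewrite ?count_sort //.
by apply: sort_sorted => a b; exact: leq_total.
Qed.

Lemma spaE n (v : 'I_n -> nat) (W : {set 'I_n}) t x :
  W = [set j | t <= v j] -> W != set0 -> {in W &, forall i j, v i = v j} ->
  1 < #|[set j | x <= v j]| -> #|[set j | x < v j]| <= 1 -> spa v = (W, x).
Proof.
move=> defW /set0Pn [w wW] eqW ge2 gt1; rewrite /spa (second_highestE ge2 gt1).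
have vt j : (t <= v j) = (j \in W) by rewrite defW inE.
have below_vw j : j \notin W -> v j < v w.
  by move=> jW; apply: leq_trans (_ : t <= v w); rewrite ?vt // ltnNge vt.
have max_vw : \max_j v j = v w.
  apply/eqP; rewrite eqn_leq leq_bigmax andbT; apply/bigmax_leqP => j _.
  have [jW | jW] := boolP (j \in W); first by rewrite (eqW j w).
  exact/ltnW/below_vw.
congr pair; apply/setP => j; rewrite inE max_vw.
have [jW | jW] := boolP (j \in W); first by rewrite (eqW j w) ?eqxx.
by rewrite ltn_eqF ?below_vw.
Qed.

Section Accum.
Variable T : finType.
Implicit Types (c : {set T} -> T -> bool) (S : {set T}) (e : seq T).

Definition accum c S (j : T) : {set T} := if c S j then j |: S else S.

Lemma subset_foldl_accum c S e : S \subset foldl (accum c) S e.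
Proof.
elim: e S => [|j e IHe] S /=; first exact: subxx.
apply: subset_trans (IHe _); rewrite /accum; case: ifP => _ //; exact: subsetUr.
Qed.

Lemma mem_foldl_accum_notin c S e j : j \notin e ->
  (j \in foldl (accum c) S e) = (j \in S).
Proof.
elim: e S => [|k e IHe] S //=; rewrite inE negb_or => /andP [jk je].
by rewrite IHe // /accum; case: ifP => _ //; rewrite !inE (negbTE jk).
Qed.

Lemma foldl_accum_sub c (A : {set T}) S e : (forall S j, c S j -> j \in A) ->
  S \subset A -> foldl (accum c) S e \subset A.
Proof.
move=> cA; elim: e S => [|k e IHe] S //= SA; apply: IHe; rewrite /accum.
by case: ifP => // /cA kA; rewrite subUset sub1set kA.
Qed.

Lemma eq_in_foldl_accum c1 c2 S e : (forall S j, j \in e -> c1 S j = c2 S j) ->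
  foldl (accum c1) S e = foldl (accum c2) S e.
Proof.
elim: e S => [|k e IHe] S //= c12; rewrite /accum c12 ?mem_head //.
by apply: IHe => S' j je; apply: c12; rewrite inE je orbT.
Qed.

Lemma foldl_accum_stable c1 c2 S e : (forall j, j \in e -> c1 set0 j = c2 S j) ->
  foldl (accum c1) set0 e = set0 -> foldl (accum c2) S e = S.
Proof.
elim: e => [|j e IHe] //= c12 stuck.
have c1F : c1 set0 j = false.
  apply/negbTE/negP => c1j.
  have /subsetP /(_ j) := subset_foldl_accum c1 (accum c1 set0 j) e.
  by rewrite stuck /accum c1j !inE eqxx => /(_ isT).
have c2F : c2 S j = false by rewrite -c12 ?mem_head.
move: stuck; rewrite /accum c1F c2F => stuck; apply: IHe stuck => k ke.
by apply: c12; rewrite inE ke orbT.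
Qed.

Lemma enum_split (i : T) :
  exists e1 e2, [/\ enum T = e1 ++ i :: e2, i \notin e1 & i \notin e2].
Proof.
have := enum_uniq T; have /splitPr [e1 e2] : i \in enum T by rewrite mem_enum.
rewrite cat_uniq /= negb_or => /and3P [_ /andP [ie1 _] /andP [ie2 _]].
by exists e1, e2.
Qed.

End Accum.

Section Stayers.
Variable n : nat.
Implicit Types (s : 'I_n -> strat n) (hist : seq {set 'I_n}) (S : {set 'I_n}).

Definition stays s p hist S (j : 'I_n) : bool :=
  (j \in last set0 hist) && s j p hist (observe S).

Lemma stayersE s p hist :
  stayers s p hist = foldl (accum (stays s p hist)) set0 (enum 'I_n).
Proof. by []. Qed.

Lemma stayers_sub s p hist : stayers s p hist \subset last set0 hist.
Proof. by apply: foldl_accum_sub (sub0set _) => S j /andP []. Qed.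

Lemma mem_stayers s p hist i e1 e2 :
  enum 'I_n = e1 ++ i :: e2 -> i \notin e1 -> i \notin e2 ->
  (i \in stayers s p hist) = stays s p hist (foldl (accum (stays s p hist)) set0 e1) i.
Proof.
move=> def_e ie1 ie2; rewrite stayersE def_e foldl_cat /= mem_foldl_accum_notin //.
by rewrite /accum; case: ifP => _; rewrite ?setU11 // mem_foldl_accum_notin ?inE.
Qed.

Lemma observe_set0 : observe (set0 : {set 'I_n}) = None.
Proof. by rewrite /observe cards0. Qed.

Lemma observe_set1 (i : 'I_n) : observe [set i] = None.
Proof. by rewrite /observe cards1. Qed.

Lemma stayers_deviation m vi s1 s2 (i : 'I_n) p hist :
  (forall j, j != i -> s1 j = s2 j) -> unconditional m vi (s2 i) ->
  0 < p < m -> (i \in last set0 hist -> p < vi) ->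
  stayers s1 p hist = stayers s2 p hist \/
  [/\ i \in last set0 hist, i \notin stayers s1 p hist
    & stayers s1 p hist = set0 -> stayers s2 p hist = [set i]].
Proof.
move=> s12 truthful pm iA_vi; have [e1 [e2 [def_e ie1 ie2]]] := enum_split i.
have stays_in (e : seq 'I_n) S j :
    i \notin e -> j \in e -> stays s1 p hist S j = stays s2 p hist S j.
  by move=> ie je; rewrite /stays s12 //; apply: contraNneq ie => <-.
have split_stayers s : stayers s p hist = foldl (accum (stays s p hist))
    (accum (stays s p hist) (foldl (accum (stays s p hist)) set0 e1) i) e2.
  by rewrite stayersE def_e foldl_cat.
set S0 := foldl (accum (stays s1 p hist)) set0 e1.
have S0E : foldl (accum (stays s2 p hist)) set0 e1 = S0.
  by apply: eq_in_foldl_accum => S j je; rewrite (stays_in e1).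
have same_after X :
    foldl (accum (stays s1 p hist)) X e2 = foldl (accum (stays s2 p hist)) X e2.
  by apply: eq_in_foldl_accum => S j je; rewrite (stays_in e2).
have [same_i | diff_i] := eqVneq (stays s1 p hist S0 i) (stays s2 p hist S0 i).
  by left; rewrite !split_stayers S0E same_after /accum same_i.
have iA : i \in last set0 hist by apply: contraNT diff_i; rewrite /stays => /negbTE ->.
have p_vi := iA_vi iA.
have stay2 : stays s2 p hist S0 i by rewrite /stays iA truthful // ltnW.
have leave1 : stays s1 p hist S0 i = false.
  by apply/negbTE; rewrite stay2 eqb_id in diff_i.
right; split => //; first by rewrite (mem_stayers _ _ _ def_e) // leave1.
have step1 : accum (stays s1 p hist) S0 i = S0 by rewrite /accum leave1.
have step2 : accum (stays s2 p hist) S0 i = i |: S0 by rewrite /accum stay2.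
rewrite !split_stayers S0E same_after step1 step2 => empty1.
have S0_0 : S0 = set0.
  by apply/eqP; rewrite -subset0 -empty1; exact: subset_foldl_accum.
rewrite S0_0 setU0 in empty1 *; apply: foldl_accum_stable empty1 => j je.
by rewrite /stays observe_set0 observe_set1.
Qed.

End Stayers.

Section Run.
Variables (n m : nat) (s : 'I_n -> strat n).
Implicit Types (hist : seq {set 'I_n}) (St : {set 'I_n}).

Lemma run0 p hist : run m s 0 p hist = rcons hist (stayers s p hist).
Proof. by []. Qed.

Lemma runS f p hist : run m s f.+1 p hist =
  if (1 < #|stayers s p hist|) && (p.+1 < m)
  then run m s f p.+1 (rcons hist (stayers s p hist))
  else rcons hist (stayers s p hist).
Proof. by []. Qed.

Lemma outcome_of_rcons hist St : hist != [::] ->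
  outcome_of m (rcons hist St) =
  if #|St| == 1 then (St, size hist)
  else if St == set0 then (last set0 hist, size hist) else (St, m).
Proof.
move=> hist_nil; rewrite /outcome_of size_rcons last_rcons /= nth_rcons nth_last.
by rewrite prednK ?leqnn // lt0n size_eq0.
Qed.

Definition nested hist := {in hist, forall A : {set 'I_n}, last set0 hist \subset A}.

Lemma run_terminal f p hist :
  0 < p < m -> m <= p + f -> size hist = p -> 1 < #|last set0 hist| -> nested hist ->
  exists h St, [/\ run m s f p hist = rcons h St, 0 < size h, 1 < #|last set0 h|
    & [/\ nested h, St \subset last set0 h & 1 < #|St| -> (size h).+1 = m]].
Proof.
elim: f p hist => [|f IHf] p hist pm mf sh A_gt1 nested_hist.
  by exists hist, (stayers s p hist); rewrite run0 sh stayers_sub; split=> //; lia.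
rewrite runS; case: ifP => [/andP [St_gt1 p1m] | terminal].
  apply: IHf; rewrite ?size_rcons ?sh ?last_rcons //; first lia.
  move=> A; rewrite last_rcons mem_rcons inE => /predU1P [-> // | A_hist].
  exact: subset_trans (stayers_sub _ _ _) (nested_hist _ A_hist).
exists hist, (stayers s p hist); rewrite sh stayers_sub; split => //; first by case/andP: pm.
by split => // St_gt1; move: terminal; rewrite St_gt1 /=; lia.
Qed.

Lemma size_run f p hist : size hist < size (run m s f p hist).
Proof.
elim: f p hist => [|f IHf] p hist; first by rewrite run0 size_rcons.
rewrite runS; case: ifP => _; last by rewrite size_rcons.
by apply: leq_trans (IHf _ _); rewrite size_rcons.
Qed.

Lemma price_run f p hist : size hist = p -> p <= m ->
  p <= (outcome_of m (run m s f p hist)).2.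
Proof.
move=> <- hm; have := size_run f (size hist) hist; rewrite /outcome_of.
case: (size (run m s f _ hist)) => [//|k]; rewrite ltnS => hk.
by case: ifP => _ //=; case: ifP.
Qed.

Lemma winners_run f p hist : hist != [::] ->
  (outcome_of m (run m s f p hist)).1 \subset last set0 hist.
Proof.
have terminal_winners q hist' : hist' != [::] ->
    (outcome_of m (rcons hist' (stayers s q hist'))).1 \subset last set0 hist'.
  move=> hist'_nil; rewrite outcome_of_rcons //; have := stayers_sub s q hist'.
  by do 2 case: ifP => _ //.
elim: f p hist => [|f IHf] p hist hist_nil; first by rewrite run0 terminal_winners.
rewrite runS; case: ifP => _; last exact: terminal_winners.
apply: subset_trans (IHf _ _ _) _; first by rewrite -size_eq0 size_rcons.
by rewrite last_rcons; exact: stayers_sub.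
Qed.

End Run.

Lemma Theta_rcons n m (h : seq {set 'I_n}) St i x :
  Theta m (rcons h St) i x = (1 <= x <= m) &&
    (if i \in St then size h < x else x == count (fun B : {set 'I_n} => i \in B) h).
Proof.
rewrite /Theta inE /= last_rcons size_rcons -cats1 count_cat /=.
by case: (i \in St); rewrite ?addn0.
Qed.

Section Implementation.
Variables (n m : nat) (h : seq {set 'I_n}) (St : {set 'I_n}) (v : 'I_n -> nat).
Local Notation q := (size h).
Local Notation A := (last set0 h).
Hypotheses (h_gt0 : 0 < q) (A_gt1 : 1 < #|A|) (nested_h : nested h).
Hypotheses (St_sub : St \subset A) (St_final : 1 < #|St| -> q.+1 = m).
Hypothesis v_Theta : forall i, Theta m (rcons h St) i (v i).

Lemma value_stayer i : i \in St -> q < v i <= m.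
Proof.
by move=> iSt; move: (v_Theta i); rewrite Theta_rcons iSt => /andP [/andP [_ ->] ->].
Qed.

Lemma value_leaver i : i \in A -> i \notin St -> v i = q.
Proof.
move=> iA iSt; move: (v_Theta i); rewrite Theta_rcons (negbTE iSt) => /andP [_ /eqP ->].
by apply/eqP; rewrite -all_count; apply/allP => B /nested_h /subsetP; apply.
Qed.

Lemma value_inactive i : i \notin A -> v i < q.
Proof.
move=> iA; have iSt : i \notin St by apply: contra iA; apply: (subsetP St_sub).
move: (v_Theta i); rewrite Theta_rcons (negbTE iSt) => /andP [_ /eqP ->].
case/lastP: h h_gt0 iA => [//|h' B] _; rewrite last_rcons -cats1 count_cat size_cat /=.
by move=> /negbTE ->; rewrite addn0 addn1 ltnS addn0 count_size.
Qed.

Lemma value_nonstayer i : i \notin St -> v i <= q.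
Proof.
move=> iSt; have [iA | iA] := boolP (i \in A); first by rewrite value_leaver.
exact/ltnW/value_inactive.
Qed.

Lemma outcome_sole_stayer w : St = [set w] -> outcome_of m (rcons h St) = spa v.
Proof.
move=> St_w; have wSt : w \in St by rewrite St_w set11.
have /andP [q_vw _] := value_stayer wSt.
have other_le j : j != w -> v j <= q.
  by move=> jw; apply: value_nonstayer; rewrite St_w inE.
have [a [aA aw]] : exists a, a \in A /\ a != w.
  case/card_gt1P: A_gt1 => x [y [xA yA xy]].
  by case: (eqVneq x w) => [xw | xw]; [exists y; rewrite -xw eq_sym | exists x].
have va : v a = q by rewrite value_leaver // St_w inE.
rewrite outcome_of_rcons -?size_eq0 -?lt0n // St_w cards1 eqxx; symmetry.
apply: (spaE (t := q.+1)).
- apply/setP => j; rewrite !inE; case: (eqVneq j w) => [-> // | jw].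
  by rewrite ltnNge other_le.
- by rewrite -card_gt0 cards1.
- by move=> j k /set1P -> /set1P ->.
- apply/card_gt1P; exists w, a; rewrite !inE va (ltnW q_vw).
  by split => //; rewrite eq_sym.
- rewrite -(cards1 w); apply/subset_leq_card/subsetP => j; rewrite !inE.
  by apply: contraTT => jw; rewrite -leqNgt other_le.
Qed.

Lemma outcome_no_stayer : St = set0 -> outcome_of m (rcons h St) = spa v.
Proof.
move=> St0; have le_q j : v j <= q by apply: value_nonstayer; rewrite St0 inE.
have vA j : j \in A -> v j = q by move=> jA; rewrite value_leaver // St0 inE.
rewrite outcome_of_rcons -?size_eq0 -?lt0n // St0 cards0 eqxx; symmetry.
apply: (spaE (t := q)).
- apply/setP => j; rewrite inE.
  have [jA | jA] := boolP (j \in A); first by rewrite vA ?leqnn.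
  by rewrite leqNgt value_inactive.
- by rewrite -card_gt0 ltnW.
- by move=> j k jA kA; rewrite !vA.
- by apply: leq_trans A_gt1 _; apply/subset_leq_card/subsetP => j jA; rewrite inE vA.
- rewrite (_ : [set j | q < v j] = set0) ?cards0 //.
  by apply/setP => j; rewrite !inE ltnNge le_q.
Qed.

Lemma outcome_many_stayers : 1 < #|St| -> outcome_of m (rcons h St) = spa v.
Proof.
move=> St_gt1; have qm := St_final St_gt1.
have vSt j : j \in St -> v j = m.
  move=> jSt; have /andP [q_vj vj_m] := value_stayer jSt.
  by apply/eqP; rewrite eqn_leq vj_m -qm.
have le_m j : v j <= m.
  have [jSt | jSt] := boolP (j \in St); first by rewrite vSt.
  by rewrite -qm ltnW // ltnS value_nonstayer.
rewrite outcome_of_rcons -?size_eq0 -?lt0n // (gtn_eqF St_gt1).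
rewrite -cards_eq0 gtn_eqF ?(ltnW St_gt1) //.
symmetry; apply: (spaE (t := m)).
- apply/setP => j; rewrite inE.
  have [jSt | jSt] := boolP (j \in St); first by rewrite vSt ?leqnn.
  by rewrite -qm leqNgt ltnS value_nonstayer.
- by rewrite -card_gt0 ltnW.
- by move=> j k jSt kSt; rewrite !vSt.
- by apply: leq_trans St_gt1 _; apply/subset_leq_card/subsetP => j jSt; rewrite inE vSt.
- rewrite (_ : [set j | m < v j] = set0) ?cards0 //.
  by apply/setP => j; rewrite !inE ltnNge le_m.
Qed.

Lemma outcome_terminal : outcome_of m (rcons h St) = spa v.
Proof.
have [St0 | St_gt0] := eqVneq St set0; first exact: outcome_no_stayer.
have [/eqP/cards1P [w St_w] | St_n1] := eqVneq #|St| 1.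
  exact: outcome_sole_stayer St_w.
by apply: outcome_many_stayers; rewrite ltn_neqAle eq_sym St_n1 card_gt0.
Qed.

End Implementation.

Section Incentives.
Variables (n m vi : nat) (i : 'I_n).

Lemma payoff_ge0 (o : outcome n) : (i \in o.1 -> o.2 <= vi) -> (0 <= payoff i vi o)%R.
Proof.
rewrite /payoff; case: ifP => // iW /(_ isT) price_vi.
by rewrite divr_ge0 ?ler0n // subr_ge0 ler_nat.
Qed.

Lemma payoff_le0 (o : outcome n) : vi <= o.2 -> (payoff i vi o <= 0)%R.
Proof.
rewrite /payoff; case: ifP => // iW vi_price.
by rewrite mulr_le0_ge0 ?invr_ge0 ?ler0n // subr_le0 ler_nat.
Qed.

Lemma unconditional_stays s p hist : unconditional m vi (s i) -> 0 < p < m ->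
  (i \in last set0 hist -> p <= vi) -> i \in stayers s p hist -> p < vi.
Proof.
move=> truthful pm iA_vi; have [e1 [e2 [def_e ie1 ie2]]] := enum_split i.
by rewrite (mem_stayers _ _ _ def_e) // => /andP [iA]; rewrite truthful ?iA_vi.
Qed.

Lemma truthful_terminal_payoff_ge0 s p hist : unconditional m vi (s i) ->
  0 < p < m -> size hist = p -> (i \in last set0 hist -> p <= vi) ->
  ~~ ((1 < #|stayers s p hist|) && (p.+1 < m)) ->
  (0 <= payoff i vi (outcome_of m (rcons hist (stayers s p hist))))%R.
Proof.
move=> truthful pm sh iA_vi terminal.
have stay_vi := unconditional_stays truthful pm iA_vi.
rewrite outcome_of_rcons -?size_eq0 ?sh -?lt0n; last by case/andP: pm.
apply: payoff_ge0; case: ifP => [_ /stay_vi/ltnW // | St_n1].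
case: ifP => [_ /iA_vi // | St_n0 /= iSt].
have St_gt1 : 1 < #|stayers s p hist| by rewrite ltn_neqAle eq_sym St_n1 card_gt0 St_n0.
by move: terminal (stay_vi iSt); rewrite St_gt1 /=; lia.
Qed.

Lemma truthful_payoff_ge0 s f p hist : unconditional m vi (s i) ->
  0 < p < m -> m <= p + f -> size hist = p -> (i \in last set0 hist -> p <= vi) ->
  (0 <= payoff i vi (outcome_of m (run m s f p hist)))%R.
Proof.
move=> truthful; elim: f p hist => [|f IHf] p hist pm mf sh iA_vi.
  rewrite run0; apply: truthful_terminal_payoff_ge0 => //.
  by apply/negP => /andP [_]; lia.
rewrite runS; case: ifP => [/andP [St_gt1 p1m] | /negbT].
  apply: IHf; rewrite ?size_rcons ?sh //; first lia.
  by rewrite last_rcons => /(unconditional_stays truthful pm iA_vi).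
exact: truthful_terminal_payoff_ge0.
Qed.

Section Deviation.
Variables (s1 s2 : 'I_n -> strat n).
Hypotheses (s12 : forall j, j != i -> s1 j = s2 j) (truthful : unconditional m vi (s2 i)).

Lemma deviation_leave_payoff f p hist :
  0 < p < m -> m <= p + f -> size hist = p -> (i \in last set0 hist -> p <= vi) ->
  p < vi -> i \notin stayers s1 p hist ->
  (stayers s1 p hist = set0 -> stayers s2 p hist = [set i]) ->
  (payoff i vi (outcome_of m (run m s1 f p hist)) <=
   payoff i vi (outcome_of m (run m s2 f p hist)))%R.
Proof.
move=> pm mf sh iA_vi p_vi iSt1 sole_i.
have hist_nil : hist != [::] by rewrite -size_eq0 sh -lt0n; case/andP: pm.
have [iW | iW] := boolP (i \in (outcome_of m (run m s1 f p hist)).1); last first.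
  by rewrite {1}/payoff (negbTE iW) truthful_payoff_ge0.
have terminal_win : i \in (outcome_of m (rcons hist (stayers s1 p hist))).1 ->
    stayers s1 p hist = set0.
  rewrite outcome_of_rcons //; case: ifP => _ /=; first by rewrite (negbTE iSt1).
  by case: ifP => [/eqP // | _ /=]; rewrite (negbTE iSt1).
have St1_0 : stayers s1 p hist = set0.
  move: iW; case: f {mf} => [|f]; rewrite ?run0 ?runS; first exact: terminal_win.
  case: ifP => _ iW; last exact: terminal_win.
  have := winners_run m s1 f p.+1 (hist := rcons hist (stayers s1 p hist)).
  rewrite -size_eq0 size_rcons last_rcons => /(_ isT) /subsetP /(_ i iW).
  by rewrite (negbTE iSt1).
have terminal_run s St :
    stayers s p hist = St -> #|St| <= 1 -> run m s f p hist = rcons hist St.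
  by move=> <- St_le1; case: f {mf iW} => [|f]; rewrite ?run0 ?runS // ltnNge St_le1.
rewrite (terminal_run s1 set0) ?cards0 // (terminal_run s2 [set i]) ?cards1 ?sole_i //.
rewrite !outcome_of_rcons // cards0 cards1 !eqxx /= /payoff /= set11 cards1.
have gain_ge0 : (0 <= vi%:R - p%:R :> rat)%R by rewrite subr_ge0 ler_nat ltnW.
rewrite divr1 sh; case: ifP => // iA.
have A_gt0 : 0 < #|last set0 hist| by apply/card_gt0P; exists i.
by apply: ler_piMr gain_ge0 _; rewrite invf_le1 ?ltr0n // ler1n.
Qed.

Lemma deviation_step f p hist :
  0 < p < m -> m <= p + f -> size hist = p -> (i \in last set0 hist -> p <= vi) ->
  (payoff i vi (outcome_of m (run m s1 f p hist)) <=
   payoff i vi (outcome_of m (run m s2 f p hist)))%R \/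
  stayers s1 p hist = stayers s2 p hist.
Proof.
move=> pm mf sh iA_vi.
have [/andP [iA vi_p] | active_lt] := boolP ((i \in last set0 hist) && (vi <= p)).
  left; apply: le_trans (truthful_payoff_ge0 truthful pm mf sh iA_vi).
  by apply/payoff_le0/(leq_trans vi_p)/price_run => //; case/andP: pm => _ /ltnW.
have iA_lt : i \in last set0 hist -> p < vi.
  by move=> iA; move: active_lt; rewrite iA ltnNge.
have [same | [iA iSt1 sole_i]] := stayers_deviation s12 truthful pm iA_lt; first by right.
by left; apply: deviation_leave_payoff (iA_lt iA) iSt1 sole_i.
Qed.

Lemma run_incentive f p hist :
  0 < p < m -> m <= p + f -> size hist = p -> (i \in last set0 hist -> p <= vi) ->
  (payoff i vi (outcome_of m (run m s1 f p hist)) <=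
   payoff i vi (outcome_of m (run m s2 f p hist)))%R.
Proof.
elim: f p hist => [|f IHf] p hist pm mf sh iA_vi;
  have [// | same] := deviation_step pm mf sh iA_vi; first by rewrite !run0 same.
rewrite !runS same; case: ifP => // /andP [St_gt1 p1m]; apply: IHf.
- by rewrite p1m andbT.
- lia.
- by rewrite size_rcons sh.
- by rewrite last_rcons => /(unconditional_stays truthful pm iA_vi).
Qed.

End Deviation.
End Incentives.

Lemma gstar_action_structure m : gm_action_structure m.
Proof.
move=> p /andP [p_gt0 p_lt_m]; rewrite /stay_act /leave_act /current_report.
split=> [||v|v|v] /=.
- by exists m; rewrite p_lt_m leqnn.
- by exists p.
- by rewrite andbC; case: eqP => // ->; rewrite ltnn.
- by apply/idP/idP; lia.
- by case: eqVneq => [-> // | _]; rewrite prednK.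
Qed.

Theorem proposition9 (n m : nat) (hn : 2 <= n) (hm : 2 <= m) :
  gm_action_structure m /\
  (forall (s : 'I_n -> strat n) (v : 'I_n -> nat),
      (forall i, Theta m (play m s) i (v i)) ->
      outcome_of m (play m s) = spa v) /\
  (forall (i : 'I_n) (vi : nat), 1 <= vi <= m ->
    forall sT : strat n, unconditional m vi sT ->
    forall (si : strat n) (s : 'I_n -> strat n),
      (payoff i vi (outcome_of m (play m (upd s i si)))
       <= payoff i vi (outcome_of m (play m (upd s i sT))))%R).
Proof.
have start_m : 0 < 1 < m by rewrite (leq_trans _ hm).
split; first exact: gstar_action_structure.
split.
  move=> s v v_Theta.
  have setT_gt1 : 1 < #|last set0 [:: [set: 'I_n]]| by rewrite cardsT card_ord.
  have nested_setT : nested [:: [set: 'I_n]] by move=> A /[!inE] /eqP ->.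
  have [h [St [play_hSt h_gt0 A_gt1 [nested_h St_sub St_final]]]] :=
    run_terminal s start_m (leq_addl _ _) (erefl : size [:: setT] = 1) setT_gt1 nested_setT.
  rewrite /play play_hSt in v_Theta *.
  exact: outcome_terminal v_Theta.
move=> i vi /andP [vi_gt0 _] sT truthful si s.
apply: run_incentive start_m (leq_addl _ _) (erefl : size [:: setT] = 1) (fun=> vi_gt0).
- by move=> j ji; rewrite /upd (negbTE ji).
- by rewrite /upd eqxx.
Qed.
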